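(* For every $K\in\mathcal K(\mathcal H)^{ah}$ and $t\in\mathbb R$, $$\inf_{D\in\mathcal D(\mathcal B(\mathcal H))^{ah}}\|K+D\|=\inf_{\substack{d\in\mathcal D(\mathcal K(\mathcal H))^{ah}\\ \theta\in\mathbb R}}\|K+itI+d+i\theta I\|=\inf_{d\in\mathcal D(\mathcal K(\mathcal H))^{ah}}\|K+d\|.$$ Consequently the Finsler norm $\|Xb-bX\|_b$ for $X\in(\mathcal K+\mathbb C)^{ah}$ coincides with the quotient norm of the class of $X$ in each of $\mathcal K(\mathcal H)^{ah}/\mathcal D(\mathcal K(\mathcal H))^{ah}$ (after subtracting the scalar part), $(\mathcal K+\mathbb C)^{ah}/\mathcal D(\mathcal K+\mathbb C)^{ah}$, and $(\mathcal K(\mathcal H)^{ah}+\mathcal D(\mathcal B(\mathcal H))^{ah})/\mathcal D(\mathcal B(\mathcal H))^{ah}$.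
   Context: $\mathcal H$ is a separable infinite-dimensional Hilbert space with fixed orthonormal basis $\{e_i\}$; $\mathcal K(\mathcal H)$ compact operators; $ah$ = anti-Hermitian; $\mathcal D(\mathcal B(\mathcal H))$ bounded diagonal operators, $\mathcal D(\mathcal K(\mathcal H))=\mathcal D(\mathcal B(\mathcal H))\cap\mathcal K(\mathcal H)$; $\mathcal K+\mathbb C=\{K+\lambda I\}$, $\mathcal D(\mathcal K+\mathbb C)=\mathcal D(\mathcal K(\mathcal H))+\mathbb CI$. For $b$ a compact self-adjoint diagonal operator with pairwise distinct diagonal entries and $x=Xb-bX$ with $X\in(\mathcal K+\mathbb C)^{ah}$, $\|x\|_b=\inf\{\|Y\|:Y\in(\mathcal K+\mathbb C)^{ah},\ Yb-bY=x\}$. Quotient norms are the usual infimum norms. *)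

From Stdlib Require Import Reals.
Open Scope R_scope.

Definition Cplx : Type := (R * R)%type.
Definition Cre (z : Cplx) : R := fst z.
Definition Cim (z : Cplx) : R := snd z.
Definition C0 : Cplx := (0, 0).
Definition Ci : Cplx := (0, 1).
Definition Cadd (z w : Cplx) : Cplx := (fst z + fst w, snd z + snd w).
Definition Copp (z : Cplx) : Cplx := (- fst z, - snd z).
Definition Csub (z w : Cplx) : Cplx := Cadd z (Copp w).
Definition Cmul (z w : Cplx) : Cplx :=
  (fst z * fst w - snd z * snd w, fst z * snd w + snd z * fst w).
Definition Cconj (z : Cplx) : Cplx := (fst z, - snd z).
Definition Cmod (z : Cplx) : R := sqrt (fst z * fst z + snd z * snd z).
Definition Cofreal (r : R) : Cplx := (r, 0).

Fixpoint Csum (n : nat) (f : nat -> Cplx) : Cplx :=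
  match n with O => C0 | S k => Cadd (Csum k f) (f k) end.
Fixpoint Rsum (n : nat) (f : nat -> R) : R :=
  match n with O => 0 | S k => Rsum k f + f k end.

(* ---------- operators on H = l^2(N), via matrices w.r.t. {e_i} ----------
   An operator T is identified with its matrix  T i j = <T e_j, e_i>. *)
Definition Mat : Type := nat -> nat -> Cplx.

Definition madd (A B : Mat) : Mat := fun i j => Cadd (A i j) (B i j).
Definition msub (A B : Mat) : Mat := fun i j => Csub (A i j) (B i j).
Definition mscal (c : Cplx) : Mat := fun i j => if Nat.eqb i j then c else C0.

Definition form (N : nat) (A : Mat) (x y : nat -> Cplx) : Cplx :=
  Csum N (fun i => Csum N (fun j => Cmul (Cconj (x i)) (Cmul (A i j) (y j)))).
Definition vnorm2 (N : nat) (x : nat -> Cplx) : R :=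
  Rsum N (fun i => Cmod (x i) * Cmod (x i)).

Definition opbound (A : Mat) (M : R) : Prop :=
  forall (N : nat) (x y : nat -> Cplx),
    Cmod (form N A x y) <= M * sqrt (vnorm2 N x) * sqrt (vnorm2 N y).

Definition opbounded (A : Mat) : Prop := exists M, opbound A M.

Definition is_inf (S : R -> Prop) (m : R) : Prop :=
  (forall s, S s -> m <= s) /\ (forall l, (forall s, S s -> l <= s) -> l <= m).

Definition is_opnorm (A : Mat) (r : R) : Prop := is_inf (opbound A) r.

(* operators with finitely supported matrix (the union of the M_n(C)) *)
Definition finmat (F : Mat) : Prop :=
  exists n : nat, forall i j, (n <= i)%nat \/ (n <= j)%nat -> F i j = C0.

(* K(H): the norm closure of the finite matrices *)
Definition opcompact (A : Mat) : Prop :=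
  opbounded A /\
  forall eps, 0 < eps -> exists F, finmat F /\ opbound (msub A F) eps.

Definition antiherm (A : Mat) : Prop := forall i j, A i j = Copp (Cconj (A j i)).
Definition selfadj (A : Mat) : Prop := forall i j, A i j = Cconj (A j i).
Definition isdiag (A : Mat) : Prop := forall i j, i <> j -> A i j = C0.

Definition DB_ah (D : Mat) : Prop := opbounded D /\ isdiag D /\ antiherm D.
Definition DK_ah (d : Mat) : Prop := opcompact d /\ isdiag d /\ antiherm d.
Definition K_ah (K : Mat) : Prop := opcompact K /\ antiherm K.
Definition KC_ah (X : Mat) : Prop :=
  (exists K c, opcompact K /\ X = madd K (mscal c)) /\ antiherm X.
Definition DKC_ah (E : Mat) : Prop :=
  (exists d c, opcompact d /\ isdiag d /\ E = madd d (mscal c)) /\ antiherm E.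

(* commutator  X b - b X  for diagonal b (no infinite sums needed):
   (X b - b X) i j = X i j * (b j j - b i i) *)
Definition comm_diag (X b : Mat) : Mat :=
  fun i j => Cmul (X i j) (Csub (b j j) (b i i)).

(* The whole proof rests on one compression estimate: if
   ||K - F|| <= eps with F supported in the n x n corner and P is the
   projection onto that corner, then for every diagonal D
       K + P D P = (K - F) + P (F - K) P + P (K + D) P,
   so ||K + P D P|| <= ||K + D|| + 2 eps, while P D P is a compact diagonal.
   Hence inf over D(B(H))^ah of ||K + D|| equals inf over D(K(H))^ah, and so
   does the infimum over every set of norms squeezed between the two
   (lemma [inf_between]).

   Part 2 reduces to the same squeeze for K0 = X - lam I: the scalar lam is
   purely imaginary, and every competitor in the Finsler norm or in the
   quotient norms differs from K0 by a bounded anti-Hermitian diagonal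
   (for the Finsler norm because b has distinct eigenvalues, so Yb - bY
   determines the off-diagonal part of Y). *)

From Pilot Require Import Defs.
From Stdlib Require Import Reals Lra Lia FunctionalExtensionality Classical.
From Coquelicot Require Complex.
Open Scope R_scope.

Lemma Ceq_intro (z w : Cplx) : fst z = fst w -> snd z = snd w -> z = w.
Proof. destruct z, w; simpl; intros; subst; reflexivity. Qed.

Ltac ceq :=
  apply Ceq_intro; unfold Cadd, Csub, Copp, Cmul, Cconj, C0 in *; simpl; ring.

(* Our modulus is Coquelicot's, so its lemmas on [Cmod] apply. *)
Lemma Cmod_coquelicot (z : Cplx) : Cmod z = Complex.Cmod z.
Proof. unfold Cmod, Complex.Cmod. f_equal. ring. Qed.

Lemma Cmod_ge0 (z : Cplx) : 0 <= Cmod z.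
Proof. apply sqrt_pos. Qed.

Lemma Cmod_C0 : Cmod C0 = 0.
Proof. rewrite Cmod_coquelicot. exact Complex.Cmod_0. Qed.

Lemma Cmod_opp (z : Cplx) : Cmod (Copp z) = Cmod z.
Proof. rewrite !Cmod_coquelicot. exact (Complex.Cmod_opp z). Qed.

Lemma Cmod_conj (z : Cplx) : Cmod (Cconj z) = Cmod z.
Proof. rewrite !Cmod_coquelicot. exact (Complex.Cmod_conj z). Qed.

Lemma Cmod_mul (z w : Cplx) : Cmod (Cmul z w) = Cmod z * Cmod w.
Proof. rewrite !Cmod_coquelicot. exact (Complex.Cmod_mult z w). Qed.

Lemma Cmod_triangle (z w : Cplx) : Cmod (Cadd z w) <= Cmod z + Cmod w.
Proof. rewrite !Cmod_coquelicot. exact (Complex.Cmod_triangle z w). Qed.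

Lemma Rabs_fst_le_Cmod (z : Cplx) : Rabs (fst z) <= Cmod z.
Proof. rewrite Cmod_coquelicot. exact (Complex.re_le_Cmod z). Qed.

Lemma Csub_eq0 (z w : Cplx) : Csub z w = C0 -> z = w.
Proof.
  destruct z as [a b], w as [c d]; unfold Csub, Cadd, Copp, C0; simpl.
  intros H; injection H; intros; apply Ceq_intro; simpl; lra.
Qed.

Section ComplexField.
Import Complex.

Lemma Cmul_cancel_r (u w v : Cplx) : v <> Defs.C0 -> Cmul u v = Cmul w v -> u = w.
Proof.
  intros Hv H.
  assert (E : forall z : C, z = (z * v * / v)%C) by (intros; field; exact Hv).
  rewrite (E u), (E w).
  exact (f_equal (fun z => (z * / v)%C) H).
Qed.

End ComplexField.

Lemma Csum_ext_lt (N : nat) (f g : nat -> Cplx) :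
  (forall i, (i < N)%nat -> f i = g i) -> Csum N f = Csum N g.
Proof.
  induction N; simpl; intros H; auto.
  rewrite IHN, H by (intros; try apply H; lia). reflexivity.
Qed.

Lemma Rsum_ext_lt (N : nat) (f g : nat -> R) :
  (forall i, (i < N)%nat -> f i = g i) -> Rsum N f = Rsum N g.
Proof.
  induction N; simpl; intros H; auto.
  rewrite IHN, H by (intros; try apply H; lia). reflexivity.
Qed.

Lemma Rsum_le (N : nat) (f g : nat -> R) :
  (forall i, (i < N)%nat -> f i <= g i) -> Rsum N f <= Rsum N g.
Proof.
  induction N; simpl; intros H; [lra|].
  pose proof (H N ltac:(lia)).
  assert (Rsum N f <= Rsum N g) by (apply IHN; intros; apply H; lia). lra.
Qed.

Lemma Rsum_0 (N : nat) : Rsum N (fun _ => 0) = 0.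
Proof. induction N; simpl; auto. rewrite IHN; ring. Qed.

Lemma Rsum_nonneg (N : nat) (f : nat -> R) :
  (forall i, (i < N)%nat -> 0 <= f i) -> 0 <= Rsum N f.
Proof. intros H. rewrite <- (Rsum_0 N). apply Rsum_le; auto. Qed.

Lemma Rsum_scal (N : nat) (c : R) (f : nat -> R) :
  Rsum N (fun i => c * f i) = c * Rsum N f.
Proof. induction N; simpl; [ring|]. rewrite IHN; ring. Qed.

Lemma Csum_add (N : nat) (f g : nat -> Cplx) :
  Csum N (fun i => Cadd (f i) (g i)) = Cadd (Csum N f) (Csum N g).
Proof. induction N; simpl; [ceq|]. rewrite IHN. ceq. Qed.

Lemma Csum_opp (N : nat) (f : nat -> Cplx) :
  Csum N (fun i => Copp (f i)) = Copp (Csum N f).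
Proof. induction N; simpl; [ceq|]. rewrite IHN. ceq. Qed.

Lemma Csum_zero (N : nat) (f : nat -> Cplx) :
  (forall i, (i < N)%nat -> f i = C0) -> Csum N f = C0.
Proof.
  induction N; simpl; intros H; auto.
  rewrite IHN, H by (intros; try apply H; lia). ceq.
Qed.

Lemma Csum_single (N : nat) (f : nat -> Cplx) (i : nat) : (i < N)%nat ->
  (forall k, (k < N)%nat -> k <> i -> f k = C0) -> Csum N f = f i.
Proof.
  induction N; intros Hi H; [lia|]. simpl.
  destruct (Nat.eq_dec i N).
  - subst. rewrite Csum_zero by (intros; apply H; lia). ceq.
  - rewrite IHN, (H N) by (try lia; intros; apply H; lia). ceq.
Qed.

Lemma Rsum_single (N : nat) (f : nat -> R) (i : nat) : (i < N)%nat ->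
  (forall k, (k < N)%nat -> k <> i -> f k = 0) -> Rsum N f = f i.
Proof.
  induction N; intros Hi H; [lia|]. simpl.
  destruct (Nat.eq_dec i N).
  - subst. rewrite (Rsum_ext_lt N f (fun _ => 0)), Rsum_0 by (intros; apply H; lia).
    ring.
  - rewrite IHN, (H N) by (try lia; intros; apply H; lia). ring.
Qed.

Lemma Cmod_Csum (N : nat) (f : nat -> Cplx) :
  Cmod (Csum N f) <= Rsum N (fun i => Cmod (f i)).
Proof.
  induction N; simpl; [rewrite Cmod_C0; lra|].
  eapply Rle_trans; [apply Cmod_triangle|]. lra.
Qed.

Lemma Rsum_cauchy_schwarz_sq (N : nat) (a b : nat -> R) :
  (forall i, 0 <= a i) -> (forall i, 0 <= b i) ->
  0 <= Rsum N (fun i => a i * b i) /\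
  Rsum N (fun i => a i * b i) * Rsum N (fun i => a i * b i) <=
  Rsum N (fun i => a i * a i) * Rsum N (fun i => b i * b i).
Proof.
  intros Ha Hb. induction N as [|N [HS HSS]]; simpl; [split; lra|].
  assert (HA : 0 <= Rsum N (fun i => a i * a i))
    by (apply Rsum_nonneg; intros; pose proof (Ha i); nra).
  assert (HB : 0 <= Rsum N (fun i => b i * b i))
    by (apply Rsum_nonneg; intros; pose proof (Hb i); nra).
  revert HS HSS HA HB.
  generalize (Rsum N (fun i => a i * b i)) (Rsum N (fun i => a i * a i))
             (Rsum N (fun i => b i * b i)).
  intros S A B HS HSS HA HB. pose proof (Ha N) as Hx. pose proof (Hb N) as Hy.
  set (x := a N) in *. set (y := b N) in *. clearbody x y.
  split; [nra|].
  (* the cross term is controlled by AM-GM applied to A y^2 and B x^2 *)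
  assert (Hcross : 2 * S * x * y <= A * y * y + x * x * B).
  { destruct (Rle_dec (2 * S * x * y) (A * y * y + x * x * B)) as [|Hlt]; auto.
    exfalso.
    assert (0 <= A * y * y + x * x * B) by nra.
    assert ((A * y * y + x * x * B) * (A * y * y + x * x * B)
            < (2 * S * x * y) * (2 * S * x * y)) by nra.
    pose proof (Rle_0_sqr (A * y * y - x * x * B)). unfold Rsqr in *.
    assert (0 <= x * x * y * y) by nra.
    assert (S * S * (x * x * y * y) <= A * B * (x * x * y * y)) by nra. nra. }
  nra.
Qed.

Lemma Rsum_cauchy_schwarz (N : nat) (a b : nat -> R) :
  (forall i, 0 <= a i) -> (forall i, 0 <= b i) ->
  Rsum N (fun i => a i * b i) <=
  sqrt (Rsum N (fun i => a i * a i)) * sqrt (Rsum N (fun i => b i * b i)).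
Proof.
  intros Ha Hb. destruct (Rsum_cauchy_schwarz_sq N a b Ha Hb) as [H1 H2].
  assert (HA : 0 <= Rsum N (fun i => a i * a i))
    by (apply Rsum_nonneg; intros; pose proof (Ha i); nra).
  assert (HB : 0 <= Rsum N (fun i => b i * b i))
    by (apply Rsum_nonneg; intros; pose proof (Hb i); nra).
  rewrite <- sqrt_mult, <- (sqrt_square (Rsum N (fun i => a i * b i))) at 1 by auto.
  apply sqrt_le_1_alt; auto.
Qed.

(** * Norm bounds for matrices *)

Definition mopp (A : Mat) : Mat := fun i j => Copp (A i j).
Definition mzero : Mat := fun _ _ => C0.

(* P_n A P_n, with P_n the projection onto span {e_0, ..., e_(n-1)}. *)
Definition compress (n : nat) (A : Mat) : Mat :=
  fun i j => if andb (Nat.ltb i n) (Nat.ltb j n) then A i j else C0.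

Definition vproj (n : nat) (x : nat -> Cplx) : nat -> Cplx :=
  fun i => if Nat.ltb i n then x i else C0.

Definition evec (i : nat) : nat -> Cplx :=
  fun k => if Nat.eqb k i then (1, 0) else C0.

Lemma mat_ext (A B : Mat) : (forall i j, A i j = B i j) -> A = B.
Proof.
  intros E. apply functional_extensionality; intro i.
  apply functional_extensionality; intro j. apply E.
Qed.

Lemma form_add (N : nat) (A B : Mat) (x y : nat -> Cplx) :
  form N (madd A B) x y = Cadd (form N A x y) (form N B x y).
Proof.
  unfold form. rewrite <- Csum_add. apply Csum_ext_lt; intros.
  rewrite <- Csum_add. apply Csum_ext_lt; intros. unfold madd. ceq.
Qed.

Lemma form_opp (N : nat) (A : Mat) (x y : nat -> Cplx) :
  form N (mopp A) x y = Copp (form N A x y).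
Proof.
  unfold form. rewrite <- Csum_opp. apply Csum_ext_lt; intros.
  rewrite <- Csum_opp. apply Csum_ext_lt; intros. unfold mopp. ceq.
Qed.

Lemma opbound_add (A B : Mat) (a b : R) :
  opbound A a -> opbound B b -> opbound (madd A B) (a + b).
Proof.
  intros HA HB N x y. rewrite form_add.
  eapply Rle_trans; [apply Cmod_triangle|].
  specialize (HA N x y). specialize (HB N x y). lra.
Qed.

Lemma opbound_opp (A : Mat) (a : R) : opbound A a -> opbound (mopp A) a.
Proof. intros HA N x y. rewrite form_opp, Cmod_opp. auto. Qed.

Lemma opbound_sub (A B : Mat) (a b : R) :
  opbound A a -> opbound B b -> opbound (msub A B) (a + b).
Proof. intros HA HB. apply (opbound_add A (mopp B)); auto. apply opbound_opp; auto. Qed.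

Lemma opbound_sub_swap (A B : Mat) (e : R) : opbound (msub A B) e -> opbound (msub B A) e.
Proof.
  intros H. replace (msub B A) with (mopp (msub A B))
    by (apply mat_ext; intros; unfold mopp, msub; ceq).
  apply opbound_opp; auto.
Qed.

Lemma opbound_mono (A : Mat) (M M' : R) : opbound A M -> M <= M' -> opbound A M'.
Proof.
  intros H HM N x y. eapply Rle_trans; [apply H|].
  pose proof (sqrt_pos (vnorm2 N x)). pose proof (sqrt_pos (vnorm2 N y)).
  apply Rmult_le_compat_r; auto. apply Rmult_le_compat_r; auto.
Qed.

Lemma vnorm2_evec (i : nat) : vnorm2 (S i) (evec i) = 1.
Proof.
  unfold vnorm2. rewrite (Rsum_single _ _ i).
  - unfold evec. rewrite Nat.eqb_refl. unfold Cmod; simpl.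
    replace (1 * 1 + 0 * 0) with 1 by ring. rewrite sqrt_1. ring.
  - lia.
  - intros k _ Hki. unfold evec. rewrite (proj2 (Nat.eqb_neq k i) Hki), Cmod_C0. ring.
Qed.

Lemma opbound_entry (A : Mat) (M : R) (i : nat) : opbound A M -> Cmod (A i i) <= M.
Proof.
  intros H. specialize (H (S i) (evec i) (evec i)).
  rewrite vnorm2_evec, sqrt_1 in H. unfold form in H.
  rewrite (Csum_single _ _ i), (Csum_single _ _ i) in H; try lia.
  - replace (Cmul (Cconj (evec i i)) (Cmul (A i i) (evec i i))) with (A i i) in H
      by (unfold evec; rewrite Nat.eqb_refl; ceq).
    lra.
  - intros k _ Hki. unfold evec. rewrite (proj2 (Nat.eqb_neq k i) Hki). ceq.
  - intros k _ Hki. apply Csum_zero. intros. unfold evec.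
    rewrite (proj2 (Nat.eqb_neq k i) Hki). ceq.
Qed.

Lemma opbound_nonneg (A : Mat) (M : R) : opbound A M -> 0 <= M.
Proof.
  intros H. pose proof (opbound_entry A M 0 H). pose proof (Cmod_ge0 (A 0%nat 0%nat)). lra.
Qed.

Lemma opbound_zero (A : Mat) (e : R) : (forall i j, A i j = C0) -> 0 <= e -> opbound A e.
Proof.
  intros H He N x y.
  replace (form N A x y) with C0
    by (symmetry; apply Csum_zero; intros; apply Csum_zero; intros; rewrite H; ceq).
  rewrite Cmod_C0.
  pose proof (sqrt_pos (vnorm2 N x)). pose proof (sqrt_pos (vnorm2 N y)).
  apply Rmult_le_pos; auto. apply Rmult_le_pos; auto.
Qed.

Lemma vnorm2_proj (N n : nat) (x : nat -> Cplx) : vnorm2 N (vproj n x) <= vnorm2 N x.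
Proof.
  unfold vnorm2. apply Rsum_le. intros i _. unfold vproj. destruct (Nat.ltb i n).
  - lra.
  - rewrite Cmod_C0. pose proof (Cmod_ge0 (x i)). nra.
Qed.

(* ||P_n A P_n|| <= ||A||, since <P A P y, x> = <A (P y), P x> and ||P x|| <= ||x||. *)
Lemma opbound_compress (A : Mat) (M : R) (n : nat) :
  opbound A M -> opbound (compress n A) M.
Proof.
  intros H N x y.
  replace (form N (compress n A) x y) with (form N A (vproj n x) (vproj n y)).
  - eapply Rle_trans; [apply H|].
    pose proof (opbound_nonneg A M H).
    pose proof (sqrt_le_1_alt _ _ (vnorm2_proj N n x)).
    pose proof (sqrt_le_1_alt _ _ (vnorm2_proj N n y)).
    pose proof (sqrt_pos (vnorm2 N (vproj n x))).
    pose proof (sqrt_pos (vnorm2 N (vproj n y))).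
    apply Rmult_le_compat; try apply Rmult_le_pos; auto.
    apply Rmult_le_compat_l; auto.
  - unfold form. apply Csum_ext_lt; intros. apply Csum_ext_lt; intros.
    unfold compress, vproj. destruct (Nat.ltb i n), (Nat.ltb i0 n); simpl; ceq.
Qed.

(* ||c I|| <= |c|, by the Cauchy-Schwarz inequality. *)
Lemma opbound_scal (c : Cplx) : opbound (mscal c) (Cmod c).
Proof.
  intros N x y. unfold form.
  eapply Rle_trans; [apply Cmod_Csum|].
  eapply Rle_trans; [apply Rsum_le; intros i _; apply Cmod_Csum|].
  cbv beta.
  replace (Rsum N (fun i => Rsum N (fun j =>
             Cmod (Cmul (Cconj (x i)) (Cmul (mscal c i j) (y j))))))
    with (Rsum N (fun i => Cmod c * (Cmod (x i) * Cmod (y i)))).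
  - rewrite Rsum_scal, Rmult_assoc. apply Rmult_le_compat_l; [apply Cmod_ge0|].
    apply (Rsum_cauchy_schwarz N (fun i => Cmod (x i)) (fun i => Cmod (y i)));
      intros; apply Cmod_ge0.
  - apply Rsum_ext_lt; intros i Hi. rewrite (Rsum_single _ _ i Hi).
    + unfold mscal. rewrite Nat.eqb_refl, !Cmod_mul, Cmod_conj. ring.
    + intros k _ Hki. unfold mscal.
      rewrite (proj2 (Nat.eqb_neq i k)), !Cmod_mul, Cmod_C0 by auto. ring.
Qed.

(** * Infima and the operator norm *)

Lemma inf_exists (S : R -> Prop) :
  (exists s, S s) -> (forall s, S s -> 0 <= s) -> exists m, is_inf S m.
Proof.
  intros [s0 Hs0] Hpos.
  destruct (completeness (fun x => S (- x))) as [m [Hub Hlub]].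
  - exists 0. intros x Hx. pose proof (Hpos _ Hx). lra.
  - exists (- s0). rewrite Ropp_involutive. auto.
  - exists (- m). split.
    + intros s Hs. assert (- s <= m) by (apply Hub; rewrite Ropp_involutive; auto). lra.
    + intros l Hl. assert (m <= - l) by (apply Hlub; intros x Hx; pose proof (Hl _ Hx); lra).
      lra.
Qed.

Lemma is_inf_squeeze (S T : R -> Prop) (m : R) : is_inf T m ->
  (forall s, S s -> m <= s) -> (forall r, T r -> S r) -> is_inf S m.
Proof.
  intros [_ Hglb] Hlow Hsub. split; [exact Hlow|].
  intros l Hl. apply Hglb. intros r Hr. apply Hl, Hsub, Hr.
Qed.

Lemma opnorm_le (A : Mat) (r M : R) : is_opnorm A r -> opbound A M -> r <= M.
Proof. intros [H _] HM. apply H, HM. Qed.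

Lemma opnorm_bound (A : Mat) (r e : R) : is_opnorm A r -> 0 < e -> opbound A (r + e).
Proof.
  intros [_ Hglb] He. apply NNPP. intros Hn.
  assert (r + e <= r); [|lra]. apply Hglb. intros s Hs.
  destruct (Rle_dec (r + e) s); auto.
  exfalso. apply Hn. apply (opbound_mono _ s); auto; lra.
Qed.

Lemma opnorm_bounded (A : Mat) (r : R) : is_opnorm A r -> opbounded A.
Proof. intros H. exists (r + 1). apply opnorm_bound; auto; lra. Qed.

Lemma opnorm_exists (A : Mat) : opbounded A -> exists r, is_opnorm A r.
Proof. intros Hb. apply inf_exists; auto. intros s Hs. eapply opbound_nonneg; eauto. Qed.

Lemma opnorm_nonneg (A : Mat) (r : R) : is_opnorm A r -> 0 <= r.
Proof. intros [_ Hglb]. apply Hglb. intros s Hs. eapply opbound_nonneg; eauto. Qed.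

Lemma mscal_off (c : Cplx) (i j : nat) : i <> j -> mscal c i j = C0.
Proof. intros H. unfold mscal. rewrite (proj2 (Nat.eqb_neq i j) H). auto. Qed.

Lemma antiherm_madd (A B : Mat) : antiherm A -> antiherm B -> antiherm (madd A B).
Proof. intros HA HB i j. unfold madd. rewrite (HA i j), (HB i j). ceq. Qed.

Lemma antiherm_msub (A B : Mat) : antiherm A -> antiherm B -> antiherm (msub A B).
Proof. intros HA HB i j. unfold msub. rewrite (HA i j), (HB i j). ceq. Qed.

Lemma antiherm_mscal (c : Cplx) : fst c = 0 -> antiherm (mscal c).
Proof.
  intros H i j. destruct (Nat.eq_dec i j) as [<-|Hij].
  - unfold mscal. rewrite Nat.eqb_refl. destruct c; simpl in *; subst. ceq.
  - rewrite !mscal_off by auto. ceq.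
Qed.

Lemma antiherm_diag_imag (A : Mat) (i : nat) : antiherm A -> fst (A i i) = 0.
Proof.
  intros H. pose proof (f_equal fst (H i i)) as E.
  unfold Copp, Cconj in E; simpl in E. lra.
Qed.

Lemma isdiag_madd (A B : Mat) : isdiag A -> isdiag B -> isdiag (madd A B).
Proof. intros HA HB i j H. unfold madd. rewrite HA, HB by auto. ceq. Qed.

Lemma opbounded_add (A B : Mat) : opbounded A -> opbounded B -> opbounded (madd A B).
Proof. intros [a Ha] [b Hb]. exists (a + b). apply opbound_add; auto. Qed.

Lemma opbounded_sub (A B : Mat) : opbounded A -> opbounded B -> opbounded (msub A B).
Proof. intros [a Ha] [b Hb]. exists (a + b). apply opbound_sub; auto. Qed.

Lemma finmat_compact (F : Mat) : opbounded F -> finmat F -> opcompact F.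
Proof.
  intros Hb Hf. split; auto. intros eps He. exists F. split; auto.
  apply opbound_zero; [|lra]. intros; unfold msub; ceq.
Qed.

Lemma opcompact_add (A B : Mat) : opcompact A -> opcompact B -> opcompact (madd A B).
Proof.
  intros [HAb HA] [HBb HB]. split; [apply opbounded_add; auto|].
  intros eps He.
  destruct (HA (eps / 2)) as [F1 [[n1 Hn1] H1]]; [lra|].
  destruct (HB (eps / 2)) as [F2 [[n2 Hn2] H2]]; [lra|].
  exists (madd F1 F2). split.
  - exists (Nat.max n1 n2). intros i j Hij. unfold madd. rewrite Hn1, Hn2 by lia. ceq.
  - replace (msub (madd A B) (madd F1 F2)) with (madd (msub A F1) (msub B F2))
      by (apply mat_ext; intros; unfold madd, msub; ceq).
    replace eps with (eps / 2 + eps / 2) by field. apply opbound_add; auto.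
Qed.

Lemma DK_DB (d : Mat) : DK_ah d -> DB_ah d.
Proof. intros [[Hb _] [Hd Ha]]. repeat split; auto. Qed.

Lemma mzero_DK : DK_ah mzero.
Proof.
  split; [|split].
  - apply finmat_compact.
    + exists 0. apply opbound_zero; [auto | lra].
    + exists 0%nat. intros; auto.
  - intros i j _; auto.
  - intros i j; unfold mzero; ceq.
Qed.

Lemma compress_DK (n : nat) (D : Mat) : DB_ah D -> DK_ah (compress n D).
Proof.
  intros [[M HM] [Hd Ha]]. split; [|split].
  - apply finmat_compact.
    + exists M. apply opbound_compress; auto.
    + exists n. intros i j Hij. unfold compress.
      destruct Hij as [Hij|Hij];
        [ rewrite (proj2 (Nat.ltb_ge i n) Hij)
        | rewrite (proj2 (Nat.ltb_ge j n) Hij), Bool.andb_false_r ]; reflexivity.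
  - intros i j Hij. unfold compress. rewrite Hd by auto. destruct (andb _ _); auto.
  - intros i j. unfold compress. rewrite Bool.andb_comm.
    destruct (andb _ _); [apply Ha | ceq].
Qed.

(** * The compression estimate and the squeeze *)

(* The norms ||K + d|| over compact, resp. bounded, anti-Hermitian diagonals:
   the infima of these sets are the quotient norms of K modulo D(K(H))^ah,
   resp. D(B(H))^ah. *)
Definition DKnorms (K : Mat) (r : R) : Prop := exists d, DK_ah d /\ is_opnorm (madd K d) r.
Definition DBnorms (K : Mat) (r : R) : Prop := exists D, DB_ah D /\ is_opnorm (madd K D) r.

(* If F is supported in the n x n corner and ||K - F|| <= e, then
   K + P_n D P_n = (K - F) + P_n ((F - K) + (K + D)) P_n,
   so compressing D costs at most 2 e in norm. *)
Lemma compression_estimate (K F D : Mat) (n : nat) (e M : R) :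
  (forall i j, (n <= i)%nat \/ (n <= j)%nat -> F i j = C0) ->
  opbound (msub K F) e -> opbound (madd K D) M ->
  opbound (madd K (compress n D)) (e + (e + M)).
Proof.
  intros HF HKF HKD.
  replace (madd K (compress n D))
    with (madd (msub K F) (compress n (madd (msub F K) (madd K D)))).
  - apply opbound_add; auto. apply opbound_compress, opbound_add; auto.
    apply opbound_sub_swap; auto.
  - apply mat_ext; intros i j. unfold madd, msub, compress.
    destruct (Nat.ltb i n) eqn:Ei, (Nat.ltb j n) eqn:Ej; simpl; try ceq;
      rewrite HF by (apply Nat.ltb_ge in Ei || apply Nat.ltb_ge in Ej; auto); ceq.
Qed.

Lemma DBnorms_approx (K : Mat) (s eps : R) : opcompact K -> DBnorms K s -> 0 < eps ->
  exists r, DKnorms K r /\ r <= s + eps.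
Proof.
  intros [Kb Kc] [D [HD Hs]] He.
  destruct (Kc (eps / 4)) as [F [[n Hn] HF]]; [lra|].
  pose proof (compression_estimate K F D n (eps / 4) (s + eps / 4) Hn HF
                (opnorm_bound _ _ (eps / 4) Hs ltac:(lra))) as Hb.
  destruct (opnorm_exists _ (ex_intro _ _ Hb)) as [r Hr].
  exists r. split.
  - exists (compress n D). split; auto. apply compress_DK; auto.
  - pose proof (opnorm_le _ _ _ Hr Hb). lra.
Qed.

Lemma DKnorms_inf_exists (K : Mat) : opcompact K -> exists m, is_inf (DKnorms K) m.
Proof.
  intros [Kb _]. apply inf_exists.
  - destruct (opnorm_exists (madd K mzero)) as [r Hr].
    + apply opbounded_add; auto. apply mzero_DK.
    + exists r, mzero. split; auto. apply mzero_DK.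
  - intros s [d [_ H]]. eapply opnorm_nonneg; eauto.
Qed.

Lemma inf_between (K : Mat) (m : R) (S : R -> Prop) :
  opcompact K -> is_inf (DKnorms K) m ->
  (forall s, S s -> DBnorms K s) -> (forall r, DKnorms K r -> S r) -> is_inf S m.
Proof.
  intros HK Hm HSB HKS. apply (is_inf_squeeze S (DKnorms K)); auto.
  intros s Hs. apply le_epsilon. intros eps He.
  destruct (DBnorms_approx K s eps HK (HSB s Hs) He) as [r [Hr Hle]].
  pose proof (proj1 Hm r Hr). lra.
Qed.

Lemma DBnorms_offdiag (K Z : Mat) (s : R) : is_opnorm Z s ->
  opbounded K -> antiherm K -> antiherm Z ->
  (forall i j, i <> j -> Z i j = K i j) -> DBnorms K s.
Proof.
  intros Hs Kb Ka Za HZ. exists (msub Z K). split; [split; [|split]|].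
  - apply opbounded_sub; auto. eapply opnorm_bounded; eauto.
  - intros i j Hij. unfold msub. rewrite HZ by auto. ceq.
  - apply antiherm_msub; auto.
  - replace (madd K (msub Z K)) with Z by (apply mat_ext; intros; unfold madd, msub; ceq).
    exact Hs.
Qed.

(** * Part 1: the three infima for an anti-Hermitian compact K *)

Lemma DB_quotient_eq (K : Mat) (m : R) :
  opcompact K -> is_inf (DKnorms K) m -> is_inf (DBnorms K) m.
Proof.
  intros HK Hm. apply (inf_between K); auto.
  intros r [d [Hd Hr]]. exists d. split; auto. apply DK_DB; auto.
Qed.

(* Adding imaginary scalars i t I + i theta I to K + d only moves the diagonal. *)
Lemma scalar_shift_inf (K : Mat) (t m : R) : K_ah K -> is_inf (DKnorms K) m ->
  is_inf (fun r => exists d theta, DK_ah d /\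
            is_opnorm (madd (madd (madd K (mscal (0, t))) d) (mscal (0, theta))) r) m.
Proof.
  intros [Kc Ka] Hm. apply (inf_between K); auto.
  - intros s [d [theta [[_ [dd da]] Hs]]]. apply (DBnorms_offdiag K _ s Hs); auto.
    + apply Kc.
    + repeat apply antiherm_madd; auto; apply antiherm_mscal; reflexivity.
    + intros i j Hij. unfold madd. rewrite !mscal_off, dd by auto. ceq.
  - intros r [d [Hd Hr]]. exists d, (- t). split; auto.
    replace (madd (madd (madd K (mscal (0, t))) d) (mscal (0, - t))) with (madd K d);
      auto.
    apply mat_ext; intros i j. unfold madd, mscal. destruct (Nat.eqb i j); ceq.
Qed.

(** * Part 2: the Finsler norm and the quotient norms of X = K0 + lam I *)

Lemma compact_diag_small (A : Mat) (eps : R) : opcompact A -> 0 < eps ->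
  exists n, Cmod (A n n) <= eps.
Proof.
  intros [_ Ac] He. destruct (Ac eps He) as [F [[n Hn] HF]]. exists n.
  pose proof (opbound_entry _ _ n HF) as H. unfold msub in H.
  rewrite (Hn n n) in H by lia.
  replace (Csub (A n n) C0) with (A n n) in H by ceq. exact H.
Qed.

Lemma comm_diag_offdiag (b Y X : Mat) : (forall i j, i <> j -> b i i <> b j j) ->
  comm_diag Y b = comm_diag X b -> forall i j, i <> j -> Y i j = X i j.
Proof.
  intros Hb HYX i j Hij. apply (Cmul_cancel_r _ _ (Csub (b j j) (b i i))).
  - intros H0. apply (Hb i j Hij). symmetry. apply Csub_eq0, H0.
  - exact (f_equal (fun A => A i j) HYX).
Qed.

Lemma offdiag_scal_diag (A D : Mat) (c : Cplx) (i j : nat) : isdiag D -> i <> j ->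
  madd (madd A (mscal c)) D i j = A i j.
Proof. intros HD Hij. unfold madd. rewrite mscal_off, HD by auto. ceq. Qed.

Lemma scalar_cancel (A d : Mat) (c : Cplx) :
  madd (madd A (mscal c)) (madd d (mscal (Copp c))) = madd A d.
Proof. apply mat_ext; intros i j. unfold madd, mscal. destruct (Nat.eqb i j); ceq. Qed.

Section QuotientNorms.

Variables (K0 : Mat) (lam : Cplx) (m : R).
Hypothesis K0_compact : opcompact K0.
Hypothesis X_antiherm : antiherm (madd K0 (mscal lam)).
Hypothesis K0_inf : is_inf (DKnorms K0) m.

(* The scalar part of an anti-Hermitian element of K + C is imaginary: the
   real parts of the diagonal of K0 equal -Re lam and tend to 0. *)
Lemma scalar_part_imag : fst lam = 0.
Proof.
  assert (Habs : Rabs (fst lam) <= 0).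
  { apply le_epsilon. intros eps He.
    destruct (compact_diag_small K0 eps K0_compact He) as [n Hn].
    pose proof (antiherm_diag_imag _ n X_antiherm) as E.
    unfold madd, mscal in E. rewrite Nat.eqb_refl in E. unfold Cadd in E; simpl in E.
    replace (fst lam) with (- fst (K0 n n)) by lra. rewrite Rabs_Ropp.
    pose proof (Rabs_fst_le_Cmod (K0 n n)). lra. }
  destruct (Req_dec (fst lam) 0) as [|Hne]; auto.
  pose proof (Rabs_pos_lt _ Hne). lra.
Qed.

Lemma antiherm_scal_opp : antiherm (mscal (Copp lam)).
Proof. apply antiherm_mscal. simpl. rewrite scalar_part_imag. ring. Qed.

Lemma compact_part_antiherm : antiherm K0.
Proof.
  replace K0 with (msub (madd K0 (mscal lam)) (mscal lam))
    by (apply mat_ext; intros; unfold msub, madd; ceq).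
  apply antiherm_msub; auto. apply antiherm_mscal, scalar_part_imag.
Qed.

Lemma finsler_inf (b : Mat) : (forall i j, i <> j -> b i i <> b j j) ->
  is_inf (fun r => exists Y, KC_ah Y /\ comm_diag Y b = comm_diag (madd K0 (mscal lam)) b /\
                             is_opnorm Y r) m.
Proof.
  intros Hb. apply (inf_between K0); auto.
  - intros s [Y [[_ Ya] [HYX Hs]]].
    apply (DBnorms_offdiag K0 Y s Hs); auto using compact_part_antiherm.
    + apply K0_compact.
    + intros i j Hij. rewrite (comm_diag_offdiag b Y _ Hb HYX i j Hij).
      unfold madd. rewrite mscal_off by auto. ceq.
  - intros r [d [[dc [dd da]] Hr]]. exists (madd K0 d). split; [split|split; auto].
    + exists (madd K0 d), C0. split; [apply opcompact_add; auto|].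
      apply mat_ext; intros i j. unfold madd, mscal. destruct (Nat.eqb i j); ceq.
    + apply antiherm_madd; auto using compact_part_antiherm.
    + apply mat_ext; intros i j. unfold comm_diag.
      destruct (Nat.eq_dec i j) as [<-|Hij]; [ceq|].
      unfold madd. rewrite dd, mscal_off by auto. ceq.
Qed.

Lemma KC_quotient_inf :
  is_inf (fun r => exists E, DKC_ah E /\ is_opnorm (madd (madd K0 (mscal lam)) E) r) m.
Proof.
  apply (inf_between K0); auto.
  - intros s [E [[[d [c [_ [dd HE]]]] Ea] Hs]].
    apply (DBnorms_offdiag K0 _ s Hs); auto using compact_part_antiherm, antiherm_madd.
    + apply K0_compact.
    + intros i j Hij. apply offdiag_scal_diag; auto.
      rewrite HE. apply isdiag_madd; auto. intros ? ?; apply mscal_off.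
  - intros r [d [[dc [dd da]] Hr]]. exists (madd d (mscal (Copp lam))). split.
    + split; [exists d, (Copp lam); auto|].
      apply antiherm_madd; auto using antiherm_scal_opp.
    + rewrite scalar_cancel. exact Hr.
Qed.

Lemma DB_quotient_inf : is_inf (DBnorms (madd K0 (mscal lam))) m.
Proof.
  apply (inf_between K0); auto.
  - intros s [D [[_ [Dd Da]] Hs]].
    apply (DBnorms_offdiag K0 _ s Hs); auto using compact_part_antiherm, antiherm_madd.
    + apply K0_compact.
    + intros i j Hij. apply offdiag_scal_diag; auto.
  - intros r [d [[dc [dd da]] Hr]]. exists (madd d (mscal (Copp lam))). split.
    + split; [|split].
      * apply opbounded_add; [apply dc|]. exists (Cmod (Copp lam)). apply opbound_scal.
      * apply isdiag_madd; auto. intros ? ?; apply mscal_off.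
      * apply antiherm_madd; auto using antiherm_scal_opp.
    + rewrite scalar_cancel. exact Hr.
Qed.

End QuotientNorms.

Theorem mainTheorem11 :
  (* Part 1: the three infima coincide *)
  (forall (K : Mat) (t : R), K_ah K ->
     exists m : R,
       is_inf (fun r => exists D, DB_ah D /\ is_opnorm (madd K D) r) m /\
       is_inf (fun r => exists d theta, DK_ah d /\
                  is_opnorm (madd (madd (madd K (mscal (0, t))) d) (mscal (0, theta))) r) m /\
       is_inf (fun r => exists d, DK_ah d /\ is_opnorm (madd K d) r) m)
  /\
  (* Part 2: the Finsler norm equals the three quotient norms *)
  (forall (b : Mat) (K0 : Mat) (lam : Cplx),
     opcompact b -> selfadj b -> isdiag b ->
     (forall i j, i <> j -> b i i <> b j j) ->
     opcompact K0 ->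
     KC_ah (madd K0 (mscal lam)) ->
     let X := madd K0 (mscal lam) in
     exists m : R,
       (* ||X b - b X||_b *)
       is_inf (fun r => exists Y, KC_ah Y /\ comm_diag Y b = comm_diag X b /\
                                  is_opnorm Y r) m /\
       (* quotient norm in K(H)^ah / D(K(H))^ah of X - lam I *)
       is_inf (fun r => exists d, DK_ah d /\ is_opnorm (madd K0 d) r) m /\
       (* quotient norm in (K+C)^ah / D(K+C)^ah *)
       is_inf (fun r => exists E, DKC_ah E /\ is_opnorm (madd X E) r) m /\
       (* quotient norm in (K(H)^ah + D(B(H))^ah) / D(B(H))^ah *)
       is_inf (fun r => exists D, DB_ah D /\ is_opnorm (madd X D) r) m).
Proof.
  split.
  - intros K t HK.
    destruct (DKnorms_inf_exists K (proj1 HK)) as [m Hm].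
    exists m. split; [|split].
    + exact (DB_quotient_eq K m (proj1 HK) Hm).
    + exact (scalar_shift_inf K t m HK Hm).
    + exact Hm.
  - intros b K0 lam _ _ _ Hb K0c [_ Xa] X.
    destruct (DKnorms_inf_exists K0 K0c) as [m Hm].
    exists m. split; [|split; [|split]].
    + exact (finsler_inf K0 lam m K0c Xa Hm b Hb).
    + exact Hm.
    + exact (KC_quotient_inf K0 lam m K0c Xa Hm).
    + exact (DB_quotient_inf K0 lam m K0c Xa Hm).
Qed.
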